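(* Let $E$ be a graph, $X\subseteq {\rm Reg}(E)$, $Y={\rm Reg}(E)\setminus X$, and let $c=e_1e_2\cdots e_n$ be a cycle without exits based at a vertex $w$. Put $\mu_0=w$ and, for $1\le k<n$, $\mu_k=e_1\cdots e_k$, and let $I=\{0\}\cup\{k: 1\le k<n,\ s(e_k)\in Y\}$. Then $$wC_K^X(E)w=\Big\{\sum_{\substack{0\le i\le t_1,\ 0\le j\le t_2,\ k\in I}} l_{ijk}\, c^i\mu_k\mu_k^*(c^* )^j \ :\ l_{ijk}\in K,\ t_1,t_2\in\mathbb N\cup\{0\}\Big\},$$ where $c^0=(c^* )^0=w$.
   Context: Let $K$ be a field and $E=(E^0,E^1,r,s)$ a directed graph (vertices $E^0$, edges $E^1$, range and source maps $r,s:E^1\to E^0$; no countability or finiteness assumptions). A vertex $v$ is a sink if $s^{-1}(v)=\emptyset$ and regular if $s^{-1}(v)$ is finite and nonempty; ${\rm Reg}(E)$ is the set of regular vertices. A path of length $n\ge 1$ is a sequence $\xi_1\cdots\xi_n$ of edges with $r(\xi_i)=s(\xi_{i+1})$; vertices are paths of length $0$; ${\rm Path}(E)$ is the set of finite paths, with $s,r$ extended to paths in the obvious way. For $X\subseteq{\rm Reg}(E)$, the relative Cohn path algebra $C_K^X(E)$ is the free $K$-algebra generated by $E^0\cup E^1\cup\{e^*:e\in E^1\}$ subject to: $vw=\delta_{v,w}v$ ($v,w\in E^0$); $s(e)e=er(e)=e$ and $r(e)e^*=e^*s(e)=e^*$ ($e\in E^1$); $e^*f=\delta_{e,f}r(e)$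 ($e,f\in E^1$); $v=\sum_{e\in s^{-1}(v)}ee^*$ for every $v\in X$. For a path $\alpha=\alpha_1\cdots\alpha_n$, $\alpha^*=\alpha_n^*\cdots\alpha_1^*$, and $v^*=v$ for vertices. A closed path is a path $\alpha=e_1\cdots e_n$ ($n\ge1$) with $r(e_n)=s(e_1)$; it is a cycle if $s(e_i)\ne s(e_j)$ for $i\neq j$, and it is based at $s(e_1)$. An exit of a path $e_1\cdots e_n$ is an edge $e$ with $s(e)=s(e_i)$ for some $i$ and $e\ne e_i$. *)

From HB Require Import structures.
From mathcomp Require Import all_boot all_order all_algebra.
From Stdlib Require List.
Set Implicit Arguments. Unset Strict Implicit. Unset Printing Implicit Defensive.
Import GRing.Theory.
Local Open Scope ring_scope.

(* A directed graph: arbitrary vertex type V, edge type Ed, maps s r : Ed -> V.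
   No finiteness/countability assumptions. *)

Definition regular (V Ed : Type) (s : Ed -> V) (v : V) : Prop :=
  exists l : list Ed, List.NoDup l /\ l <> nil /\ (forall f, List.In f l <-> s f = v).

(* Terms of the free (non-unital, associative) K-algebra on the generators
   v (v in E^0), e (e in E^1), e^* (e in E^1). *)
Inductive term (K V Ed : Type) : Type :=
  | TV : V -> term K V Ed
  | TE : Ed -> term K V Ed
  | TS : Ed -> term K V Ed
  | T0 : term K V Ed
  | TAdd : term K V Ed -> term K V Ed -> term K V Ed
  | TMul : term K V Ed -> term K V Ed -> term K V Ed
  | TScale : K -> term K V Ed -> term K V Ed.

Arguments TV {K V Ed}. Arguments TE {K V Ed}. Arguments TS {K V Ed}.
Arguments T0 {K V Ed}.

Definition sumT (K V Ed : Type) (l : seq (term K V Ed)) : term K V Ed :=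
  foldr (@TAdd K V Ed) T0 l.

(* The quotient term/ceq is exactly C_K^X(E). *)
Inductive ceq (K : fieldType) (V Ed : Type) (s r : Ed -> V) (X : V -> Prop)
  : term K V Ed -> term K V Ed -> Prop :=
  | ceq_refl x : ceq s r X x x
  | ceq_sym x y : ceq s r X x y -> ceq s r X y x
  | ceq_trans x y z : ceq s r X x y -> ceq s r X y z -> ceq s r X x z
  | ceq_add x x' y y' : ceq s r X x x' -> ceq s r X y y' ->
      ceq s r X (TAdd x y) (TAdd x' y')
  | ceq_mul x x' y y' : ceq s r X x x' -> ceq s r X y y' ->
      ceq s r X (TMul x y) (TMul x' y')
  | ceq_scale a x x' : ceq s r X x x' -> ceq s r X (TScale a x) (TScale a x')
  | ceq_addA x y z : ceq s r X (TAdd x (TAdd y z)) (TAdd (TAdd x y) z)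
  | ceq_addC x y : ceq s r X (TAdd x y) (TAdd y x)
  | ceq_add0 x : ceq s r X (TAdd T0 x) x
  | ceq_addN x : ceq s r X (TAdd x (TScale (-1) x)) T0
  | ceq_scaleDl a b x : ceq s r X (TScale (a + b) x) (TAdd (TScale a x) (TScale b x))
  | ceq_scaleDr a x y : ceq s r X (TScale a (TAdd x y)) (TAdd (TScale a x) (TScale a y))
  | ceq_scaleA a b x : ceq s r X (TScale (a * b) x) (TScale a (TScale b x))
  | ceq_scale1 x : ceq s r X (TScale 1 x) x
  | ceq_mulA x y z : ceq s r X (TMul x (TMul y z)) (TMul (TMul x y) z)
  | ceq_mulDl x y z : ceq s r X (TMul (TAdd x y) z) (TAdd (TMul x z) (TMul y z))
  | ceq_mulDr x y z : ceq s r X (TMul x (TAdd y z)) (TAdd (TMul x y) (TMul x z))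
  | ceq_scalel a x y : ceq s r X (TMul (TScale a x) y) (TScale a (TMul x y))
  | ceq_scaler a x y : ceq s r X (TMul x (TScale a y)) (TScale a (TMul x y))
  | rel_vv v : ceq s r X (TMul (TV v) (TV v)) (TV v)
  | rel_vw v w : v <> w -> ceq s r X (TMul (TV v) (TV w)) T0
  | rel_se e : ceq s r X (TMul (TV (s e)) (TE e)) (TE e)
  | rel_er e : ceq s r X (TMul (TE e) (TV (r e))) (TE e)
  | rel_rs e : ceq s r X (TMul (TV (r e)) (TS e)) (TS e)
  | rel_ss e : ceq s r X (TMul (TS e) (TV (s e))) (TS e)
  | rel_ee e : ceq s r X (TMul (TS e) (TE e)) (TV (r e))
  | rel_ef e f : e <> f -> ceq s r X (TMul (TS e) (TE f)) T0
  | rel_CK v (l : list Ed) : X v -> List.NoDup l -> (forall f, List.In f l <-> s f = v) ->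
      ceq s r X (TV v) (sumT [seq TMul (TE f) (TS f) | f <- l]).

(* c = e 1 ... e n (edges indexed 1..n) is a cycle based at w. *)
Definition is_cycle (V Ed : Type) (s r : Ed -> V) (w : V) (n : nat) (e : nat -> Ed) : Prop :=
  (1 <= n)%N /\ s (e 1%N) = w /\
  (forall i, (1 <= i)%N -> (i < n)%N -> r (e i) = s (e i.+1)) /\
  r (e n) = s (e 1%N) /\
  (forall i j, (1 <= i <= n)%N -> (1 <= j <= n)%N -> s (e i) = s (e j) -> i = j).

Definition no_exit (V Ed : Type) (s : Ed -> V) (n : nat) (e : nat -> Ed) : Prop :=
  forall f i, (1 <= i <= n)%N -> s f = s (e i) -> f = e i.

Section Paths.
Variables (K V Ed : Type) (w : V) (e : nat -> Ed).

Fixpoint pathT (k : nat) : term K V Ed :=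
  match k with
  | 0 => TV w
  | 1 => TE (e 1%N)
  | k'.+1 => TMul (pathT k') (TE (e k))
  end.

Fixpoint ghostT (k : nat) : term K V Ed :=
  match k with
  | 0 => TV w
  | 1 => TS (e 1%N)
  | k'.+1 => TMul (TS (e k)) (ghostT k')
  end.

Definition mu (k : nat) : term K V Ed := pathT k.
Definition mustar (k : nat) : term K V Ed := ghostT k.

Fixpoint cpow (n i : nat) : term K V Ed :=
  match i with
  | 0 => TV w
  | 1 => pathT n
  | i'.+1 => TMul (cpow n i') (pathT n)
  end.

Fixpoint cstarpow (n j : nat) : term K V Ed :=
  match j with
  | 0 => TV w
  | 1 => ghostT n
  | j'.+1 => TMul (ghostT n) (cstarpow n j')
  end.

Definition basisT (n i j k : nat) : term K V Ed :=
  TMul (TMul (TMul (cpow n i) (mu k)) (mustar k)) (cstarpow n j).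

Definition combT (n t1 t2 : nat) (l : nat -> nat -> nat -> K) : term K V Ed :=
  sumT (flatten [seq flatten [seq [seq TScale (l i j k) (basisT n i j k) | k <- iota 0 n]
                             | j <- iota 0 t2.+1]
                | i <- iota 0 t1.+1]).
End Paths.

From HB Require Import structures.
From mathcomp Require Import all_boot all_order all_algebra.
From Stdlib Require List.
From Stdlib Require Import Setoid Morphisms Classical.
Set Implicit Arguments. Unset Strict Implicit. Unset Printing Implicit Defensive.
Import GRing.Theory.
Local Open Scope ring_scope.

(* Every element of C_K^X(E) is a linear combination of monomials
   alpha u beta^*.  Cutting such a monomial down to w.(alpha u beta^* ).w kills it
   unless alpha and beta^* both run along c, because the only edge leaving a
   vertex of c is the next edge of c; what survives is c^i mu_k mu_k^* (c^* )^j.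
   If s(e_k) is in X, the Cuntz-Krieger relation at s(e_k), whose only outgoing
   edge is e_k, reads e_k e_k^* = s(e_k), so mu_k mu_k^* = mu_(k-1) mu_(k-1)^*;
   descending in k lands in I.  Conversely each c^i mu_k mu_k^* (c^* )^j is fixed
   by x |-> w x w. *)

#[local] Arguments ceq_addA {K V Ed s r X}.
#[local] Arguments ceq_addC {K V Ed s r X}.
#[local] Arguments ceq_mulA {K V Ed s r X}.

#[local] Instance ceq_Equivalence K V Ed s r X : Equivalence (@ceq K V Ed s r X).
Proof. split; [exact: ceq_refl | exact: ceq_sym | exact: ceq_trans]. Qed.
#[local] Instance TAdd_Proper K V Ed s r X :
  Proper (@ceq K V Ed s r X ==> ceq s r X ==> ceq s r X) (@TAdd K V Ed).
Proof. by move=> ??????; apply: ceq_add. Qed.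
#[local] Instance TMul_Proper K V Ed s r X :
  Proper (@ceq K V Ed s r X ==> ceq s r X ==> ceq s r X) (@TMul K V Ed).
Proof. by move=> ??????; apply: ceq_mul. Qed.
#[local] Instance TScale_Proper K V Ed s r X a :
  Proper (@ceq K V Ed s r X ==> ceq s r X) (@TScale K V Ed a).
Proof. by move=> ???; apply: ceq_scale. Qed.

Inductive span (K : fieldType) (V Ed : Type) (s r : Ed -> V) (X : V -> Prop)
    (P : term K V Ed -> Prop) : term K V Ed -> Prop :=
  | span_gen x : P x -> span s r X P x
  | span_0 : span s r X P T0
  | span_add x y : span s r X P x -> span s r X P y -> span s r X P (TAdd x y)
  | span_scale a x : span s r X P x -> span s r X P (TScale a x)
  | span_ceq x y : ceq s r X x y -> span s r X P x -> span s r X P y.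

#[local] Instance span_Proper K V Ed s r X P :
  Proper (@ceq K V Ed s r X ==> iff) (@span K V Ed s r X P).
Proof. by move=> x y Exy; split; apply: span_ceq; [|symmetry]. Qed.

Section CohnAlgebra.
Variables (K : fieldType) (V Ed : Type).
Context {s r : Ed -> V} {X : V -> Prop}.
Local Notation T := (term K V Ed).
Local Notation CE := (@ceq K V Ed s r X).
Local Notation span := (@span K V Ed s r X).

Lemma ceq_addr0 (x : T) : CE (TAdd x T0) x.
Proof. rewrite ceq_addC ceq_add0; reflexivity. Qed.

Lemma ceq0_addxx (x : T) : CE (TAdd x x) x -> CE x T0.
Proof.
move=> Hxx; transitivity (TAdd (TAdd x x) (TScale (-1) x)).
  by rewrite -ceq_addA ceq_addN ceq_addr0; reflexivity.
by rewrite Hxx ceq_addN; reflexivity.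
Qed.

Lemma ceq_mul0l (x : T) : CE (TMul T0 x) T0.
Proof. by apply: ceq0_addxx; rewrite -ceq_mulDl ceq_add0; reflexivity. Qed.

Lemma ceq_mul0r (x : T) : CE (TMul x T0) T0.
Proof. by apply: ceq0_addxx; rewrite -ceq_mulDr ceq_add0; reflexivity. Qed.

Lemma ceq_scaler0 a : CE (TScale a (T0 : T)) T0.
Proof. by apply: ceq0_addxx; rewrite -ceq_scaleDr ceq_add0; reflexivity. Qed.

Lemma ceq_scale0 (x : T) : CE (TScale 0 x) T0.
Proof. by apply: ceq0_addxx; rewrite -ceq_scaleDl addr0; reflexivity. Qed.

Lemma ceq_addACA (a b c d : T) :
  CE (TAdd (TAdd a b) (TAdd c d)) (TAdd (TAdd a c) (TAdd b d)).
Proof.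
rewrite -ceq_addA (ceq_addA b) (ceq_addC b c) -(ceq_addA c) ceq_addA.
reflexivity.
Qed.

Lemma sumT_cat (a b : seq T) : CE (sumT (a ++ b)) (TAdd (sumT a) (sumT b)).
Proof.
elim: a => [|x a IHa] /=; first by rewrite ceq_add0; reflexivity.
by rewrite IHa ceq_addA; reflexivity.
Qed.

Lemma sumT_flatten (L : seq (seq T)) :
  CE (sumT (flatten L)) (sumT (map (@sumT K V Ed) L)).
Proof.
elim: L => [|a L IHL] /=; first reflexivity.
by rewrite sumT_cat IHL; reflexivity.
Qed.

Lemma eq_sumT (A : eqType) (f g : A -> T) xs :
  (forall x, x \in xs -> CE (f x) (g x)) -> CE (sumT (map f xs)) (sumT (map g xs)).
Proof.
elim: xs => [|a xs IHxs] fg /=; first reflexivity.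
rewrite fg ?mem_head // IHxs; first reflexivity.
by move=> x xs_x; apply: fg; rewrite in_cons xs_x orbT.
Qed.

Lemma sumT_add (A : Type) (f g : A -> T) xs :
  CE (TAdd (sumT (map f xs)) (sumT (map g xs)))
     (sumT (map (fun x => TAdd (f x) (g x)) xs)).
Proof.
elim: xs => [|a xs IHxs] /=; first by rewrite ceq_add0; reflexivity.
by rewrite ceq_addACA IHxs; reflexivity.
Qed.

Lemma sumT_scale (A : Type) c (f : A -> T) xs :
  CE (TScale c (sumT (map f xs))) (sumT (map (fun x => TScale c (f x)) xs)).
Proof.
elim: xs => [|a xs IHxs] /=; first by rewrite ceq_scaler0; reflexivity.
by rewrite ceq_scaleDr IHxs; reflexivity.
Qed.

Lemma sumT_eq0 (A : eqType) (f : A -> T) xs :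
  (forall x, x \in xs -> CE (f x) T0) -> CE (sumT (map f xs)) T0.
Proof.
move=> f0; transitivity (sumT (map (fun _ => T0 : T) xs)); first exact: eq_sumT.
elim: xs {f0} => [|a xs IHxs] /=; first reflexivity.
by rewrite IHxs ceq_add0; reflexivity.
Qed.

Lemma sumT_single (A : eqType) (f : A -> T) xs x0 :
  uniq xs -> x0 \in xs -> (forall x, x \in xs -> x != x0 -> CE (f x) T0) ->
  CE (sumT (map f xs)) (f x0).
Proof.
elim: xs => [//|a xs IHxs] /= /andP[xs'a uniq_xs].
rewrite in_cons => /orP[/eqP->|xs_x0] f0.
  rewrite sumT_eq0 ?ceq_addr0; first reflexivity.
  move=> x xs_x; apply: f0; first by rewrite in_cons xs_x orbT.
  by apply: contraNneq xs'a => <-.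
rewrite f0 ?mem_head ?ceq_add0 ?IHxs //; first reflexivity.
  by move=> x xs_x; apply: f0; rewrite in_cons xs_x orbT.
by apply: contraNneq xs'a => ->.
Qed.

Lemma sumT_iota_widen (f : nat -> T) t t' : (t <= t')%N ->
  (forall i, (t < i)%N -> CE (f i) T0) ->
  CE (sumT [seq f i | i <- iota 0 t.+1]) (sumT [seq f i | i <- iota 0 t'.+1]).
Proof.
move=> le_tt' f0; rewrite -(subnKC le_tt') -addSn iotaD map_cat sumT_cat.
rewrite [X in TAdd _ X]sumT_eq0 ?ceq_addr0; first reflexivity.
by move=> i; rewrite mem_iota add0n => /andP[/f0].
Qed.

Lemma sub_span (P Q : T -> Prop) x : (forall y, P y -> span Q y) -> span P x -> span Q x.
Proof.
move=> PQ; elim=> {x} [x /PQ //||x y _ Sx _ Sy|a x _ Sx|x y Exy _ Sx].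
- exact: span_0.
- exact: span_add.
- exact: span_scale.
- by rewrite -Exy.
Qed.

Lemma span_sumT (P : T -> Prop) (A : Type) (f : A -> T) xs :
  (forall x, span P (f x)) -> span P (sumT (map f xs)).
Proof.
move=> Sf; elim: xs => [|a xs IHxs] /=; [exact: span_0 | exact: span_add].
Qed.

Lemma span_mull (P Q : T -> Prop) y z :
  (forall x, P x -> span Q (TMul y x)) -> span P z -> span Q (TMul y z).
Proof.
move=> yPQ; elim=> {z} [z /yPQ //||x z _ Sx _ Sz|a z _ Sz|x z Exz _ Sx].
- by rewrite ceq_mul0r; apply: span_0.
- by rewrite ceq_mulDr; apply: span_add.
- by rewrite ceq_scaler; apply: span_scale.
- by rewrite -Exz.
Qed.

Lemma span_mulr (P Q : T -> Prop) y z :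
  (forall x, P x -> span Q (TMul x z)) -> span P y -> span Q (TMul y z).
Proof.
move=> Pz; elim=> {y} [y /Pz //||x y _ Sx _ Sy|a y _ Sy|x y Exy _ Sx].
- by rewrite ceq_mul0l; apply: span_0.
- by rewrite ceq_mulDl; apply: span_add.
- by rewrite ceq_scalel; apply: span_scale.
- by rewrite -Exy.
Qed.

Lemma span_mul (P Q R : T -> Prop) y z :
  (forall a b, P a -> Q b -> span R (TMul a b)) -> span P y -> span Q z ->
  span R (TMul y z).
Proof.
move=> PQR Sy Sz; apply: span_mulr Sy => a Pa.
by apply: span_mull Sz => b Qb; apply: PQR.
Qed.

Lemma span_fixed_sandwich (a b y : T) :
  span (fun x => CE (TMul (TMul a x) b) x) y -> CE (TMul (TMul a y) b) y.
Proof.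
elim=> {y} [y //||x y _ Ex _ Ey|c y _ Ey|x y Exy _ Ex].
- by rewrite ceq_mul0r ceq_mul0l; reflexivity.
- by rewrite ceq_mulDr ceq_mulDl Ex Ey; reflexivity.
- by rewrite ceq_scaler ceq_scalel Ey; reflexivity.
- by rewrite -Exy.
Qed.

(* The monomial [alpha u beta^*], with [alpha = f_1 ... f_p] given by [al] and
   [beta^* = g_1^* ... g_q^*] given by [ga]. *)
Fixpoint realpath (al : list Ed) (u : V) : T :=
  if al is f :: al' then TMul (TE f) (realpath al' u) else TV u.

Definition mul_ghost (x : T) (g : Ed) : T := TMul x (TS g).

Definition monomial al u ga : T := foldl mul_ghost (realpath al u) ga.

Definition is_monomial (x : T) := exists al u ga, x = monomial al u ga.

#[local] Instance foldl_mul_ghost_Proper : Proper (CE ==> eq ==> CE) (foldl mul_ghost).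
Proof.
move=> x y Exy _ ga ->; elim: ga x y Exy => [|g ga IHga] x y Exy //=.
by apply: IHga; rewrite /mul_ghost Exy; reflexivity.
Qed.

Lemma mul_foldl_ghost (x y : T) ga :
  CE (TMul x (foldl mul_ghost y ga)) (foldl mul_ghost (TMul x y) ga).
Proof.
elim: ga y => [|g ga IHga] y /=; first reflexivity.
by rewrite IHga /mul_ghost ceq_mulA; reflexivity.
Qed.

Lemma foldl_ghost0 ga : CE (foldl mul_ghost T0 ga) T0.
Proof.
elim: ga => [|g ga IHga] /=; first reflexivity.
by rewrite /mul_ghost ceq_mul0l IHga; reflexivity.
Qed.

Lemma realpath_vertex al u : CE (TMul (realpath al u) (TV u)) (realpath al u).
Proof.
elim: al => [|f al IHal] /=; first exact: rel_vv.
by rewrite -ceq_mulA IHal; reflexivity.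
Qed.

Lemma monomialE al u ga :
  CE (monomial al u ga) (TMul (realpath al u) (foldl mul_ghost (TV u) ga)).
Proof. by rewrite mul_foldl_ghost realpath_vertex; reflexivity. Qed.

Lemma span_vertex_monomial v al u ga : span is_monomial (TMul (TV v) (monomial al u ga)).
Proof.
rewrite mul_foldl_ghost; case: al => [|f al] /=.
  have [<-|neq_vu] := classic (v = u).
    by rewrite rel_vv; apply: span_gen; exists [::], v, ga.
  by rewrite rel_vw // foldl_ghost0; apply: span_0.
have [<-|neq_fv] := classic (s f = v).
  by rewrite ceq_mulA rel_se; apply: span_gen; exists (f :: al), u, ga.
rewrite -rel_se !ceq_mulA rel_vw; last by auto.
by rewrite !ceq_mul0l foldl_ghost0; apply: span_0.
Qed.

Lemma span_ghost_monomial g al u ga : span is_monomial (TMul (TS g) (monomial al u ga)).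
Proof.
rewrite mul_foldl_ghost; case: al => [|f al] /=.
  have [<-|neq_gu] := classic (s g = u).
    by rewrite rel_ss -rel_rs; apply: span_gen; exists [::], (r g), (g :: ga).
  by rewrite -rel_ss -ceq_mulA rel_vw // ceq_mul0r foldl_ghost0; apply: span_0.
have [<-|neq_gf] := classic (g = f).
  by rewrite ceq_mulA rel_ee -mul_foldl_ghost; apply: span_vertex_monomial.
by rewrite ceq_mulA rel_ef // ceq_mul0l foldl_ghost0; apply: span_0.
Qed.

Lemma span_monomials (x : T) : span is_monomial x.
Proof.
have mul_closed y z : span is_monomial z -> span is_monomial (TMul y z).
  elim: y z => [v|f|g||y1 IH1 y2 IH2|y1 IH1 y2 IH2|a y IH] z Sz.
  - by apply: span_mull Sz => _ [al [u [ga ->]]]; apply: span_vertex_monomial.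
  - apply: span_mull Sz => _ [al [u [ga ->]]].
    by rewrite mul_foldl_ghost; apply: span_gen; exists (f :: al), u, ga.
  - by apply: span_mull Sz => _ [al [u [ga ->]]]; apply: span_ghost_monomial.
  - by rewrite ceq_mul0l; apply: span_0.
  - by rewrite ceq_mulDl; apply: span_add; [apply: IH1 | apply: IH2].
  - by rewrite -ceq_mulA; apply: IH1; apply: IH2.
  - by rewrite ceq_scalel; apply: span_scale; apply: IH.
elim: x => [v|f|g||y1 IH1 y2 IH2|y1 IH1 y2 IH2|a y IH].
- by apply: span_gen; exists [::], v, [::].
- by rewrite -rel_er; apply: span_gen; exists [:: f], (r f), [::].
- by rewrite -rel_rs; apply: span_gen; exists [::], (r g), [:: g].
- exact: span_0.
- exact: span_add.
- exact: mul_closed.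
- exact: span_scale.
Qed.

End CohnAlgebra.

Arguments realpath {K V Ed}.
Arguments monomial {K V Ed}.
Arguments mul_ghost {K V Ed}.

Definition comb3 {K : fieldType} {V Ed : Type} (b : nat -> nat -> nat -> term K V Ed)
    m t1 t2 (l : nat -> nat -> nat -> K) : term K V Ed :=
  sumT [seq sumT [seq sumT [seq TScale (l i j k) (b i j k) | k <- iota 0 m]
                  | j <- iota 0 t2.+1] | i <- iota 0 t1.+1].

Definition trunc3 {K : fieldType} t1 t2 (l : nat -> nat -> nat -> K) i j k :=
  if (i <= t1)%N && (j <= t2)%N then l i j k else 0.

Definition delta3 {K : fieldType} (i0 j0 k0 i j k : nat) : K :=
  if (i == i0) && (j == j0) && (k == k0) then 1 else 0.

Section Comb3.
Variables (K : fieldType) (V Ed : Type).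
Context {s r : Ed -> V} {X : V -> Prop} {b : nat -> nat -> nat -> term K V Ed} {m : nat}.
Local Notation T := (term K V Ed).
Local Notation CE := (@ceq K V Ed s r X).
Local Notation span := (@span K V Ed s r X).

Lemma comb3_add t1 t2 l l' :
  CE (TAdd (comb3 b m t1 t2 l) (comb3 b m t1 t2 l'))
     (comb3 b m t1 t2 (fun i j k => l i j k + l' i j k)).
Proof.
rewrite /comb3 sumT_add; apply: eq_sumT => i _.
rewrite sumT_add; apply: eq_sumT => j _.
rewrite sumT_add; apply: eq_sumT => k _.
by rewrite ceq_scaleDl; reflexivity.
Qed.

Lemma comb3_scale t1 t2 c l :
  CE (TScale c (comb3 b m t1 t2 l)) (comb3 b m t1 t2 (fun i j k => c * l i j k)).
Proof.
rewrite /comb3 sumT_scale; apply: eq_sumT => i _.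
rewrite sumT_scale; apply: eq_sumT => j _.
rewrite sumT_scale; apply: eq_sumT => k _.
by rewrite ceq_scaleA; reflexivity.
Qed.

Lemma comb3_eq0 t1 t2 l : (forall i j k, l i j k = 0) -> CE (comb3 b m t1 t2 l) T0.
Proof.
move=> l0; apply: sumT_eq0 => i _; apply: sumT_eq0 => j _; apply: sumT_eq0 => k _.
by rewrite l0 ceq_scale0; reflexivity.
Qed.

Lemma comb3_widen t1 t2 t1' t2' l : (t1 <= t1')%N -> (t2 <= t2')%N ->
  CE (comb3 b m t1 t2 l) (comb3 b m t1' t2' (trunc3 t1 t2 l)).
Proof.
move=> le_t1 le_t2; rewrite /comb3 -(sumT_iota_widen le_t1); last first.
  move=> i lt_t1i; apply: sumT_eq0 => j _; apply: sumT_eq0 => k _.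
  by rewrite /trunc3 leqNgt lt_t1i ceq_scale0; reflexivity.
apply: eq_sumT => i; rewrite mem_iota ltnS => /andP[_ le_it1].
rewrite -(sumT_iota_widen le_t2); last first.
  move=> j lt_t2j; apply: sumT_eq0 => k _.
  by rewrite /trunc3 [(j <= t2)%N]leqNgt lt_t2j andbF ceq_scale0; reflexivity.
apply: eq_sumT => j; rewrite mem_iota ltnS => /andP[_ le_jt2].
by apply: eq_sumT => k _; rewrite /trunc3 le_it1 le_jt2; reflexivity.
Qed.

Lemma comb3_delta i0 j0 k0 : (k0 < m)%N ->
  CE (comb3 b m i0 j0 (delta3 i0 j0 k0)) (b i0 j0 k0).
Proof.
move=> lt_k0m; rewrite /comb3.
rewrite (sumT_single (x0 := i0)) ?iota_uniq ?mem_iota ?ltnS ?leqnn //; last first.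
  move=> i _ /negbTE ne_ii0; apply: sumT_eq0 => j _; apply: sumT_eq0 => k _.
  by rewrite /delta3 ne_ii0 ceq_scale0; reflexivity.
rewrite (sumT_single (x0 := j0)) ?iota_uniq ?mem_iota ?ltnS ?leqnn //; last first.
  move=> j _ /negbTE ne_jj0; apply: sumT_eq0 => k _.
  by rewrite /delta3 eqxx ne_jj0 ceq_scale0; reflexivity.
rewrite (sumT_single (x0 := k0)) ?iota_uniq ?mem_iota //; last first.
  move=> k _ /negbTE ne_kk0.
  by rewrite /delta3 !eqxx ne_kk0 ceq_scale0; reflexivity.
by rewrite /delta3 !eqxx ceq_scale1; reflexivity.
Qed.

Lemma span_comb3 (P : T -> Prop) t1 t2 l :
  (forall i j k, P (b i j k)) -> span P (comb3 b m t1 t2 l).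
Proof.
move=> Pb; apply: span_sumT => i; apply: span_sumT => j; apply: span_sumT => k.
exact/span_scale/span_gen.
Qed.

End Comb3.

Section CycleWithoutExits.
Variables (K : fieldType) (V Ed : Type) (s r : Ed -> V) (X : V -> Prop).
Variables (w : V) (n : nat) (e : nat -> Ed).
Hypotheses (cycle_c : is_cycle s r w n e) (no_exit_c : no_exit s n e).
Local Notation T := (term K V Ed).
Local Notation CE := (@ceq K V Ed s r X).
Local Notation PT := (pathT K w e).
Local Notation GT := (ghostT K w e).
Local Notation CP := (cpow K w e n).
Local Notation CS := (cstarpow K w e n).
Local Notation BT := (basisT K w e n).
Local Notation span := (@span K V Ed s r X).

(* The vertex reached by [mu_k]. *)
Definition cvert k := s (e k.+1).

Lemma cycle_size_gt0 : (0 < n)%N.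
Proof. by case: cycle_c. Qed.

Lemma source_e1 : s (e 1%N) = w.
Proof. by case: cycle_c => _ []. Qed.

Lemma range_en : r (e n) = w.
Proof. by case: cycle_c => _ [s1 [_ [-> _]]]. Qed.

Lemma range_e k : (1 <= k)%N -> (k < n)%N -> r (e k) = cvert k.
Proof. by case: cycle_c => _ [_ [re _]]; apply: re. Qed.

Lemma cvert_inj k1 k2 : (k1 < n)%N -> (k2 < n)%N -> cvert k1 = cvert k2 -> k1 = k2.
Proof.
case: cycle_c => _ [_ [_ [_ inj_s]]] lt_k1n lt_k2n /inj_s.
by rewrite !ltnS lt_k1n lt_k2n => /(_ isT isT) [].
Qed.

Lemma cvert_out_edges k : (k < n)%N -> forall f, List.In f [:: e k.+1] <-> s f = cvert k.
Proof.
move=> lt_kn f; split; first by case=> [<-|[]].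
by move=> sf; left; symmetry; apply: no_exit_c; rewrite //= ltnW.
Qed.

Lemma regular_cvert k : (k < n)%N -> regular s (cvert k).
Proof.
move=> lt_kn; exists [:: e k.+1]; split; last split=> //; last exact: cvert_out_edges.
by apply: List.NoDup_cons; [case | apply: List.NoDup_nil].
Qed.

Lemma CK_cvert k : (k < n)%N -> X (cvert k) ->
  CE (TMul (TE (e k.+1)) (TS (e k.+1))) (TV (cvert k)).
Proof.
move=> lt_kn Xk; rewrite (@rel_CK K V Ed s r X _ [:: e k.+1] Xk) /=.
- by rewrite ceq_addr0; reflexivity.
- by apply: List.NoDup_cons; [case | apply: List.NoDup_nil].
- exact: cvert_out_edges.
Qed.

Lemma pathTS k : CE (TMul (PT k) (TE (e k.+1))) (PT k.+1).
Proof. by case: k => [|k] /=; [rewrite -source_e1 rel_se | ]; reflexivity. Qed.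

Lemma ghostTS k : CE (TMul (TS (e k.+1)) (GT k)) (GT k.+1).
Proof. by case: k => [|k] /=; [rewrite -source_e1 rel_ss | ]; reflexivity. Qed.

Lemma vertex_pathT k : CE (TMul (TV w) (PT k)) (PT k).
Proof.
elim: k => [|k IHk]; first exact: rel_vv.
by rewrite -pathTS ceq_mulA IHk; reflexivity.
Qed.

Lemma ghostT_vertex k : CE (TMul (GT k) (TV w)) (GT k).
Proof.
elim: k => [|k IHk]; first exact: rel_vv.
by rewrite -ghostTS -ceq_mulA IHk; reflexivity.
Qed.

Lemma cpowS q : CE (TMul (CP q) (PT n)) (CP q.+1).
Proof. by case: q => [|q] /=; [apply: vertex_pathT | reflexivity]. Qed.

Lemma cstarpowS q : CE (TMul (GT n) (CS q)) (CS q.+1).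
Proof. by case: q => [|q] /=; [apply: ghostT_vertex | reflexivity]. Qed.

Lemma pathT_range k : (1 <= k)%N -> CE (TMul (PT k) (TV (r (e k)))) (PT k).
Proof. by case: k => [//|k] _; rewrite -pathTS -ceq_mulA rel_er; reflexivity. Qed.

Lemma range_ghostT k : (1 <= k)%N -> CE (TMul (TV (r (e k))) (GT k)) (GT k).
Proof. by case: k => [//|k] _; rewrite -ghostTS ceq_mulA rel_rs; reflexivity. Qed.

Lemma vertex_cpow q : CE (TMul (TV w) (CP q)) (CP q).
Proof.
elim: q => [|q IHq]; first exact: rel_vv.
by rewrite -cpowS ceq_mulA IHq; reflexivity.
Qed.

Lemma cstarpow_vertex q : CE (TMul (CS q) (TV w)) (CS q).
Proof.
elim: q => [|q IHq]; first exact: rel_vv.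
by rewrite -cstarpowS -ceq_mulA IHq; reflexivity.
Qed.

Lemma cpow_vertex q : CE (TMul (CP q) (TV w)) (CP q).
Proof.
case: q => [|q]; first exact: rel_vv.
rewrite -cpowS -ceq_mulA -[in TV w]range_en pathT_range ?cycle_size_gt0 //.
reflexivity.
Qed.

Lemma vertex_cstarpow q : CE (TMul (TV w) (CS q)) (CS q).
Proof.
case: q => [|q]; first exact: rel_vv.
rewrite -cstarpowS ceq_mulA -[in TV w]range_en range_ghostT ?cycle_size_gt0 //.
reflexivity.
Qed.

Lemma pathT_cvert k : (k < n)%N -> CE (TMul (PT k) (TV (cvert k))) (PT k).
Proof.
case: k => [|k] lt_kn; first by rewrite /cvert source_e1; apply: rel_vv.
by rewrite -range_e // pathT_range //; reflexivity.
Qed.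

Lemma cvert_ghostT k : (k < n)%N -> CE (TMul (TV (cvert k)) (GT k)) (GT k).
Proof.
case: k => [|k] lt_kn; first by rewrite /cvert source_e1; apply: rel_vv.
by rewrite -range_e // range_ghostT //; reflexivity.
Qed.

Definition cwalk q k : T := TMul (CP q) (PT k).
Definition cwalk_star q k : T := TMul (GT k) (CS q).

Lemma cwalk_cvert q k : (k < n)%N -> CE (TMul (cwalk q k) (TV (cvert k))) (cwalk q k).
Proof. by move=> lt_kn; rewrite -ceq_mulA pathT_cvert //; reflexivity. Qed.

Lemma cvert_cwalk_star q k : (k < n)%N ->
  CE (TMul (TV (cvert k)) (cwalk_star q k)) (cwalk_star q k).
Proof. by move=> lt_kn; rewrite ceq_mulA cvert_ghostT //; reflexivity. Qed.

Lemma cwalk_next q k : (k < n)%N -> exists q' k', (k' < n)%N /\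
  CE (TMul (cwalk q k) (TE (e k.+1))) (cwalk q' k').
Proof.
move=> lt_kn; have Ek : CE (TMul (cwalk q k) (TE (e k.+1))) (cwalk q k.+1).
  by rewrite /cwalk -ceq_mulA pathTS; reflexivity.
have [lt_k1n|le_nk1] := ltnP k.+1 n; first by exists q, k.+1.
have eq_k1n : k.+1 = n by apply/eqP; rewrite eqn_leq lt_kn.
exists q.+1, 0%N; split; first exact: cycle_size_gt0.
by rewrite Ek /cwalk eq_k1n cpowS [PT 0]/= cpow_vertex; reflexivity.
Qed.

Lemma cwalk_star_next q k : (k < n)%N -> exists q' k', (k' < n)%N /\
  CE (TMul (TS (e k.+1)) (cwalk_star q k)) (cwalk_star q' k').
Proof.
move=> lt_kn; have Ek : CE (TMul (TS (e k.+1)) (cwalk_star q k)) (cwalk_star q k.+1).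
  by rewrite /cwalk_star ceq_mulA ghostTS; reflexivity.
have [lt_k1n|le_nk1] := ltnP k.+1 n; first by exists q, k.+1.
have eq_k1n : k.+1 = n by apply/eqP; rewrite eqn_leq lt_kn.
exists q.+1, 0%N; split; first exact: cycle_size_gt0.
by rewrite Ek /cwalk_star eq_k1n cstarpowS [GT 0]/= vertex_cstarpow; reflexivity.
Qed.

Lemma cvert_edge0 f k : (k < n)%N -> f <> e k.+1 -> CE (TMul (TV (cvert k)) (TE f)) T0.
Proof.
move=> lt_kn neq_fe; rewrite -rel_se ceq_mulA rel_vw ?ceq_mul0l; first reflexivity.
by move/esym/(cvert_out_edges lt_kn) => [/esym|[]].
Qed.

Lemma ghost_cvert0 g k : (k < n)%N -> g <> e k.+1 -> CE (TMul (TS g) (TV (cvert k))) T0.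
Proof.
move=> lt_kn neq_ge; rewrite -rel_ss -ceq_mulA rel_vw ?ceq_mul0r; first reflexivity.
by move/(cvert_out_edges lt_kn) => [/esym|[]].
Qed.

Definition is_cwalk (x : T) := exists q k, (k < n)%N /\ x = cwalk q k.
Definition is_cwalk_star (x : T) := exists q k, (k < n)%N /\ x = cwalk_star q k.
Definition is_basisT (x : T) := exists i j k, (k < n)%N /\ x = BT i j k.

Lemma span_cwalk_realpath al u q k : (k < n)%N ->
  span is_cwalk (TMul (cwalk q k) (realpath al u)).
Proof.
elim: al q k => [|f al IHal] q k lt_kn /=.
  have [<-|neq_ku] := classic (cvert k = u).
    by rewrite cwalk_cvert //; apply: span_gen; exists q, k.
  by rewrite -cwalk_cvert // -ceq_mulA rel_vw // ceq_mul0r; apply: span_0.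
have [->|neq_fe] := classic (f = e k.+1).
  have [q' [k' [lt_k'n Eqk]]] := cwalk_next q lt_kn.
  by rewrite ceq_mulA Eqk; apply: IHal.
rewrite -cwalk_cvert // -ceq_mulA (ceq_mulA (TV _)) cvert_edge0 //.
by rewrite ceq_mul0l ceq_mul0r; apply: span_0.
Qed.

Lemma span_ghosts_cwalk_star u ga q k : (k < n)%N ->
  span is_cwalk_star (TMul (foldl mul_ghost (TV u) ga) (cwalk_star q k)).
Proof.
elim/last_ind: ga q k => [|ga g IHga] q k lt_kn /=.
  have [->|neq_uk] := classic (u = cvert k).
    by rewrite cvert_cwalk_star //; apply: span_gen; exists q, k.
  by rewrite -cvert_cwalk_star // ceq_mulA rel_vw // ceq_mul0l; apply: span_0.
rewrite foldl_rcons /mul_ghost -ceq_mulA.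
have [->|neq_ge] := classic (g = e k.+1).
  have [q' [k' [lt_k'n Eqk]]] := cwalk_star_next q lt_kn.
  by rewrite Eqk; apply: IHga.
rewrite -cvert_cwalk_star // (ceq_mulA (TS _)) ghost_cvert0 //.
by rewrite ceq_mul0l ceq_mul0r; apply: span_0.
Qed.

Lemma span_cwalk_mul_star q1 k1 q2 k2 : (k1 < n)%N -> (k2 < n)%N ->
  span is_basisT (TMul (cwalk q1 k1) (cwalk_star q2 k2)).
Proof.
move=> lt_k1n lt_k2n; have [<-|neq_k] := classic (k1 = k2).
  by rewrite /cwalk /cwalk_star ceq_mulA; apply: span_gen; exists q1, q2, k1.
rewrite -cwalk_cvert // -cvert_cwalk_star // -ceq_mulA (ceq_mulA (TV _)) rel_vw.
  by rewrite ceq_mul0l ceq_mul0r; apply: span_0.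
by move/(cvert_inj lt_k1n lt_k2n).
Qed.

Lemma span_corner_monomial al u ga :
  span is_basisT (TMul (TMul (TV w) (monomial al u ga)) (TV w)).
Proof.
have -> : CE (TMul (TMul (TV w) (monomial al u ga)) (TV w))
    (TMul (TMul (cwalk 0 0) (realpath al u))
          (TMul (foldl mul_ghost (TV u) ga) (cwalk_star 0 0))).
  by rewrite monomialE /cwalk /cwalk_star /= !rel_vv !ceq_mulA; reflexivity.
apply: span_mul (span_cwalk_realpath al u 0 cycle_size_gt0)
  (span_ghosts_cwalk_star u ga 0 cycle_size_gt0).
by move=> a b [q1 [k1 [lt_k1n ->]]] [q2 [k2 [lt_k2n ->]]]; apply: span_cwalk_mul_star.
Qed.

Lemma span_corner x : span is_basisT (TMul (TMul (TV w) x) (TV w)).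
Proof.
elim: (@span_monomials _ _ _ s r X x) => {x}
  [_ [al [u [ga ->]]]||x y _ Sx _ Sy|a x _ Sx|x y Exy _ Sx].
- exact: span_corner_monomial.
- by rewrite ceq_mul0r ceq_mul0l; apply: span_0.
- by rewrite ceq_mulDr ceq_mulDl; apply: span_add.
- by rewrite ceq_scaler ceq_scalel; apply: span_scale.
- by rewrite -Exy.
Qed.

Lemma basisT_CK i j k : (k.+1 < n)%N -> X (cvert k) -> CE (BT i j k.+1) (BT i j k).
Proof.
move=> lt_k1n Xk; have lt_kn := ltnW lt_k1n.
rewrite /basisT /mu /mustar -pathTS -ghostTS (ceq_mulA (CP i)) -(ceq_mulA _ (TE _)).
by rewrite (ceq_mulA (TE _)) CK_cvert // cvert_ghostT //; reflexivity.
Qed.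

Definition in_I k :=
  k = 0%N \/ ((1 <= k)%N /\ (k < n)%N /\ (regular s (s (e k)) /\ ~ X (s (e k)))).

Definition is_basisT_I (x : T) := exists i j k, in_I k /\ x = BT i j k.

Lemma span_basisT_I i j k : (k < n)%N -> span is_basisT_I (BT i j k).
Proof.
elim: k => [|k IHk] lt_kn; first by apply: span_gen; exists i, j, 0%N; split; [left|].
have [Xk|notXk] := classic (X (cvert k)).
  by rewrite basisT_CK //; apply: IHk; apply: ltnW.
apply: span_gen; exists i, j, k.+1; split=> //; right; split=> //; split=> //.
by split=> //; apply: regular_cvert; apply: ltnW.
Qed.

Lemma span_corner_I x : span is_basisT_I (TMul (TMul (TV w) x) (TV w)).
Proof.
by apply: sub_span (span_corner x) => _ [i [j [k [lt_kn ->]]]]; apply: span_basisT_I.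
Qed.

Lemma combT_comb3 t1 t2 l : CE (combT w e n t1 t2 l) (comb3 BT n t1 t2 l).
Proof.
rewrite /combT sumT_flatten -map_comp; apply: eq_sumT => i _.
by rewrite /comp sumT_flatten -map_comp; reflexivity.
Qed.

Lemma in_I_lt k : in_I k -> (k < n)%N.
Proof. by case=> [->|[_ []]] //; apply: cycle_size_gt0. Qed.

Lemma span_I_comb3 y : span is_basisT_I y -> exists t1 t2 l,
  (forall i j k, ~ in_I k -> l i j k = 0) /\ CE y (comb3 BT n t1 t2 l).
Proof.
elim=> {y} [_ [i [j [k [Ik ->]]]]| |x y _ [t1 [t2 [l [l0 Ex]]]]
              _ [t1' [t2' [l' [l'0 Ey]]]]|a x _ [t1 [t2 [l [l0 Ex]]]]|
            x y Exy _ [t1 [t2 [l [l0 Ex]]]]].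
- exists i, j, (delta3 i j k); split=> [i' j' k' notIk'|].
    rewrite /delta3; case: (k' =P k) => [Ek|_]; last by rewrite andbF.
    by case: notIk'; rewrite Ek.
  by rewrite comb3_delta ?in_I_lt //; reflexivity.
- exists 0%N, 0%N, (fun _ _ _ => 0); split=> //.
  by rewrite comb3_eq0 //; reflexivity.
- exists (maxn t1 t1'), (maxn t2 t2'),
    (fun i j k => trunc3 t1 t2 l i j k + trunc3 t1' t2' l' i j k); split.
    by move=> i j k notIk; rewrite /trunc3 l0 // l'0 // !if_same addr0.
  rewrite Ex Ey (comb3_widen l (leq_maxl t1 t1') (leq_maxl t2 t2')).
  by rewrite (comb3_widen l' (leq_maxr t1 t1') (leq_maxr t2 t2')) comb3_add; reflexivity.
- exists t1, t2, (fun i j k => a * l i j k); split.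
    by move=> i j k /l0 ->; rewrite mulr0.
  by rewrite Ex comb3_scale; reflexivity.
- by exists t1, t2, l; split=> //; rewrite -Exy.
Qed.

Lemma corner_basisT i j k : CE (TMul (TMul (TV w) (BT i j k)) (TV w)) (BT i j k).
Proof.
rewrite /basisT -ceq_mulA -(ceq_mulA _ (CS j)) cstarpow_vertex.
by rewrite !(ceq_mulA (TV w)) vertex_cpow; reflexivity.
Qed.

Lemma corner_combT t1 t2 l :
  CE (TMul (TMul (TV w) (combT w e n t1 t2 l)) (TV w)) (combT w e n t1 t2 l).
Proof.
rewrite combT_comb3; apply: span_fixed_sandwich; apply: span_comb3 => i j k.
exact: corner_basisT.
Qed.

End CycleWithoutExits.

Theorem mainTheorem1 (K : fieldType) (V Ed : Type) (s r : Ed -> V)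
  (X : V -> Prop) (HX : forall v, X v -> regular s v)
  (w : V) (n : nat) (e : nat -> Ed)
  (Hc : is_cycle s r w n e) (Hne : no_exit s n e) :
  let Y := fun v => regular s v /\ ~ X v in
  let inI := fun k => k = 0%N \/ ((1 <= k)%N /\ (k < n)%N /\ Y (s (e k))) in
  (forall x : term K V Ed,
     exists t1 t2 (l : nat -> nat -> nat -> K),
       (forall i j k, ~ inI k -> l i j k = 0%R) /\
       ceq s r X (TMul (TMul (TV w) x) (TV w)) (combT w e n t1 t2 l)) /\
  (forall t1 t2 (l : nat -> nat -> nat -> K),
     (forall i j k, ~ inI k -> l i j k = 0%R) ->
     exists x : term K V Ed,
       ceq s r X (TMul (TMul (TV w) x) (TV w)) (combT w e n t1 t2 l)).
Proof.
move=> Y inI; split=> [x | t1 t2 l _].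
  have [t1 [t2 [l [l0 Ex]]]] := span_I_comb3 Hc (span_corner_I X Hc Hne x).
  by exists t1, t2, l; split; [exact: l0 | rewrite Ex combT_comb3; reflexivity].
by exists (combT w e n t1 t2 l); apply: corner_combT.
Qed.
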